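(* Let $\mathbf X=\{X_n\}$ and $\mathbf Y=\{Y_n\}$ be general sources. If $\mathbf X$ is an approximating source for $\mathbf Y$, then $$\inf_{m>0}\ \liminf_{n\to\infty}\ \inf_{c\in\mathbb R}\Big\{\Pr\Big\{\log\tfrac{1}{P_{Y_n}(Y_n)}<c+m\Big\}-\Pr\Big\{\log\tfrac{1}{P_{X_n}(X_n)}<c\Big\}\Big\}\ \ge 0 .$$
   Context: Logarithms are natural. A general source $\mathbf X=\{X_n\}_{n\ge1}$ is a sequence of random variables, $X_n$ taking values in a countable set $\mathcal X_n$, with no consistency requirements between different $n$. Similarly $Y_n$ takes values in a countable set $\mathcal Y_n$. The variational distance is $d(P,Q)=\sum_a|P(a)-Q(a)|$. $\mathbf X$ is an approximating source for $\mathbf Y$ if there exist deterministic maps $\phi_n:\mathcal X_n\to\mathcal Y_n$ with $\lim_{n\to\infty}d(P_{Y_n},P_{\phi_n(X_n)})=0$. *)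

From Stdlib Require Import Reals Lra Classical ClassicalEpsilon.
Open Scope R_scope.

(* Alphabets: every countable set X_n is identified (via an injection) with a
   subset of nat; a random variable X_n is represented by its distribution
   P_{X_n} : nat -> R (points outside the image of X_n get probability 0). *)

(* Sum of a series over nat (value of the series if it converges, 0 otherwise). *)
Definition series (f : nat -> R) : R :=
  match excluded_middle_informative (exists l, infinite_sum f l) with
  | left h => proj1_sig (constructive_indefinite_description _ h)
  | right _ => 0
  end.

Definition is_dist (P : nat -> R) : Prop :=
  (forall a, 0 <= P a) /\ infinite_sum P 1.

Definition vdist (P Q : nat -> R) : R := series (fun a => Rabs (P a - Q a)).

Definition pushforward (P : nat -> R) (phi : nat -> nat) : nat -> R :=
  fun y => series (fun x => if Nat.eq_dec (phi x) y then P x else 0).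

Definition prob_info_lt (P : nat -> R) (t : R) : R :=
  series (fun a => if Rlt_dec 0 (P a) then
                     if Rlt_dec (ln (/ P a)) t then P a else 0
                   else 0).

Definition approximating (PX PY : nat -> nat -> R) : Prop :=
  exists phi : nat -> nat -> nat,
    Un_cv (fun n => vdist (PY n) (pushforward (PX n) (phi n))) 0.

(* Infimum / supremum of a set of reals (0 if it does not exist in R). *)
Definition is_inf (E : R -> Prop) (l : R) : Prop :=
  (forall x, E x -> l <= x) /\ (forall b, (forall x, E x -> b <= x) -> b <= l).
Definition is_sup (E : R -> Prop) (l : R) : Prop :=
  (forall x, E x -> x <= l) /\ (forall b, (forall x, E x -> x <= b) -> l <= b).

Definition Rinf (E : R -> Prop) : R :=
  match excluded_middle_informative (exists l, is_inf E l) with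
  | left h => proj1_sig (constructive_indefinite_description _ h)
  | right _ => 0
  end.
Definition Rsup (E : R -> Prop) : R :=
  match excluded_middle_informative (exists l, is_sup E l) with
  | left h => proj1_sig (constructive_indefinite_description _ h)
  | right _ => 0
  end.

Definition Rliminf (a : nat -> R) : R :=
  Rsup (fun y => exists N : nat,
          y = Rinf (fun z => exists n : nat, (N <= n)%nat /\ z = a n)).

From Stdlib Require Import Reals Lra Lia ClassicalEpsilon.
Open Scope R_scope.

(* Proof idea.  Let phi_n be the maps with d_n := d(P_{Y_n}, P_{Z_n}) -> 0,
   where Z_n := phi_n(X_n).  Two inequalities, valid for every threshold c:

   (1) Merging symbols can only increase probabilities:
       P_{X_n}(x) <= P_{Z_n}(phi_n x), hence
       Pr{log 1/P_X(X) < c} <= Pr{log 1/P_Z(Z) < c}.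
   (2) Continuity of the information spectrum in variational distance:
       for m > 0,  Pr{log 1/P_Z(Z) < c} <= Pr{log 1/P_Y(Y) < c + m} + k_m d(P_Y,P_Z)
       with k_m = 1/(1 - e^{-m}); pointwise, a symbol counted on the left but
       not on the right has P_Y(a) <= e^{-m} P_Z(a), so P_Z(a) <= k_m |P_Y a - P_Z a|.

   Together the n-th inner infimum over c is >= -k_m d_n, which tends to 0,
   so each liminf is >= 0 and so is their infimum over m. *)

Lemma series_eq (f : nat -> R) (l : R) : infinite_sum f l -> series f = l.
Proof.
  intros H. unfold series. destruct excluded_middle_informative as [h|h].
  - destruct (constructive_indefinite_description _ h) as [l' Hl']; simpl.
    exact (uniqueness_sum _ _ _ Hl' H).
  - exfalso; apply h; eauto.
Qed.

Lemma cv_le_const (u : nat -> R) (l B : R) :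
  Un_cv u l -> (forall n, u n <= B) -> l <= B.
Proof.
  intros Hu Hb. apply (Rle_cv_lim Hb Hu).
  intros e he. exists 0%nat. intros. unfold Rdist. rewrite Rminus_diag, Rabs_R0. lra.
Qed.

Lemma series_nonneg (f : nat -> R) : (forall a, 0 <= f a) -> 0 <= series f.
Proof.
  intros Hf. unfold series. destruct excluded_middle_informative as [h|h]; [|lra].
  destruct (constructive_indefinite_description _ h) as [l Hl]; simpl.
  apply Rle_trans with (sum_f_R0 f 0); [apply Hf|]. apply sum_incr; auto.
Qed.

Lemma series_bounded (f : nat -> R) (B : R) :
  (forall a, 0 <= f a) -> (forall N, sum_f_R0 f N <= B) ->
  infinite_sum f (series f) /\ (forall N, sum_f_R0 f N <= series f) /\ series f <= B.
Proof.
  intros Hf Hb.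
  assert (Hg : Un_growing (sum_f_R0 f)) by (intros n; simpl; specialize (Hf (S n)); lra).
  destruct (growing_cv _ Hg) as [l Hl]; [exists B; intros x [i ->]; apply Hb|].
  rewrite (series_eq _ _ Hl). split; [exact Hl|split].
  - intros N; apply sum_incr; auto.
  - exact (cv_le_const _ _ _ Hl Hb).
Qed.

Lemma dist_partial_le_1 (P : nat -> R) (N : nat) : is_dist P -> sum_f_R0 P N <= 1.
Proof. intros [H0 H1]. apply sum_incr; auto. Qed.

Lemma cv_finite_sum (u : nat -> nat -> R) (l : nat -> R) (M : nat) :
  (forall y, Un_cv (u y) (l y)) ->
  Un_cv (fun N => sum_f_R0 (fun y => u y N) M) (sum_f_R0 l M).
Proof. intros Hu. induction M as [|M IH]; simpl; [apply Hu|apply CV_plus; auto]. Qed.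

Lemma sum_point_mass (h : nat -> R) (z : nat) (u : R) (M : nat) :
  sum_f_R0 (fun y => h y * (if Nat.eq_dec z y then u else 0)) M =
  if Nat.leb z M then h z * u else 0.
Proof.
  induction M as [|M IH]; simpl.
  - destruct (Nat.eq_dec z 0) as [->|ne]; simpl; [ring|].
    destruct z; [lia|simpl; ring].
  - rewrite IH. destruct (Nat.eq_dec z (S M)) as [->|ne].
    + rewrite (proj2 (Nat.leb_gt (S M) M) ltac:(lia)), Nat.leb_refl. ring.
    + destruct (Nat.leb_spec z M); destruct (Nat.leb_spec z (S M)); try lia; ring.
Qed.

Lemma sum_over_fibres (h X : nat -> R) (phi : nat -> nat) (N M : nat) :
  sum_f_R0 (fun y => h y * sum_f_R0 (fun x => if Nat.eq_dec (phi x) y then X x else 0) N) M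
  = sum_f_R0 (fun x => if Nat.leb (phi x) M then h (phi x) * X x else 0) N.
Proof.
  induction N as [|N IH]; simpl; [apply sum_point_mass|].
  rewrite <- IH, <- sum_point_mass, <- plus_sum. apply sum_eq. intros; ring.
Qed.

Lemma image_bounded (phi : nat -> nat) (N : nat) :
  exists M, forall x, (x <= N)%nat -> (phi x <= M)%nat.
Proof.
  induction N as [|N [M HM]].
  - exists (phi 0%nat); intros x Hx; replace x with 0%nat by lia; lia.
  - exists (Nat.max M (phi (S N))). intros x Hx.
    destruct (Nat.eq_dec x (S N)) as [->|ne]; [lia|]. specialize (HM x ltac:(lia)); lia.
Qed.

Definition is_subdist (P : nat -> R) : Prop :=
  (forall a, 0 <= P a) /\ (forall N, sum_f_R0 P N <= 1).

Lemma dist_subdist (P : nat -> R) : is_dist P -> is_subdist P.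
Proof. intros hP. split; [apply hP|intros; apply dist_partial_le_1; auto]. Qed.

Section Pushforward.
Variable X : nat -> R.
Variable phi : nat -> nat.
Hypothesis hX : is_dist X.

Definition fibre (y : nat) : nat -> R :=
  fun x => if Nat.eq_dec (phi x) y then X x else 0.

Lemma fibre_nonneg (y x : nat) : 0 <= fibre y x.
Proof. unfold fibre; destruct Nat.eq_dec; [apply hX|lra]. Qed.

Lemma fibre_series (y : nat) :
  infinite_sum (fibre y) (pushforward X phi y)
  /\ (forall N, sum_f_R0 (fibre y) N <= pushforward X phi y).
Proof.
  destruct (series_bounded (fibre y) 1 (fibre_nonneg y)) as [Hs [Hp _]].
  - intros N. apply Rle_trans with (sum_f_R0 X N); [|apply dist_partial_le_1; auto].
    apply sum_Rle; intros; unfold fibre; destruct Nat.eq_dec; [lra|apply hX].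
  - split; assumption.
Qed.

Lemma pushforward_nonneg (y : nat) : 0 <= pushforward X phi y.
Proof.
  apply Rle_trans with (sum_f_R0 (fibre y) 0); [apply fibre_nonneg|apply fibre_series].
Qed.

Lemma le_pushforward (x : nat) : X x <= pushforward X phi (phi x).
Proof.
  apply Rle_trans with (sum_f_R0 (fibre (phi x)) x); [|apply fibre_series].
  assert (Hx : fibre (phi x) x = X x)
    by (unfold fibre; destruct Nat.eq_dec; congruence).
  destruct x as [|x]; simpl; [lra|].
  rewrite Hx. pose proof (cond_pos_sum (fibre (phi (S x))) x (fibre_nonneg _)). lra.
Qed.

Lemma pushforward_subdist : is_subdist (pushforward X phi).
Proof.
  split; [exact pushforward_nonneg|]. intros M.
  apply (cv_le_const _ _ _ (cv_finite_sum (fun y N => sum_f_R0 (fibre y) N) _ M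
                              (fun y => proj1 (fibre_series y)))).
  intros N.
  replace (sum_f_R0 (fun y => sum_f_R0 (fibre y) N) M)
    with (sum_f_R0 (fun y => 1 * sum_f_R0 (fibre y) N) M)
    by (apply sum_eq; intros; ring).
  unfold fibre. rewrite sum_over_fibres.
  apply Rle_trans with (sum_f_R0 X N); [|apply dist_partial_le_1; auto].
  apply sum_Rle; intros. destruct Nat.leb; [lra|apply hX].
Qed.

End Pushforward.

Definition info_lt_term (P : nat -> R) (t : R) (a : nat) : R :=
  if Rlt_dec 0 (P a) then if Rlt_dec (ln (/ P a)) t then P a else 0 else 0.

Lemma info_lt_term_nonneg (P : nat -> R) (t : R) (a : nat) : 0 <= info_lt_term P t a.
Proof. unfold info_lt_term; repeat destruct Rlt_dec; lra. Qed.

Lemma prob_info_lt_partial (P : nat -> R) (t : R) (N : nat) :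
  is_subdist P -> sum_f_R0 (info_lt_term P t) N <= prob_info_lt P t.
Proof.
  intros [H0 H1]. apply (series_bounded _ 1 (info_lt_term_nonneg P t)).
  intros M. apply Rle_trans with (sum_f_R0 P M); [|apply H1].
  apply sum_Rle; intros; unfold info_lt_term; specialize (H0 n);
    repeat destruct Rlt_dec; lra.
Qed.

Lemma ln_inv_antitone (a b : R) : 0 < a -> a <= b -> ln (/ b) <= ln (/ a).
Proof.
  intros Ha Hab. rewrite !ln_Rinv by lra.
  destruct (Req_dec a b) as [->|ne]; [lra|].
  pose proof (ln_increasing a b Ha ltac:(lra)). lra.
Qed.

Lemma prob_info_lt_pushforward (X : nat -> R) (phi : nat -> nat) (c : R) :
  is_dist X -> prob_info_lt X c <= prob_info_lt (pushforward X phi) c.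
Proof.
  intros hX. set (Z := pushforward X phi).
  apply (series_bounded _ _ (info_lt_term_nonneg X c)). intros N.
  destruct (image_bounded phi N) as [M HM].
  set (h := fun y => if Rlt_dec 0 (Z y) then if Rlt_dec (ln (/ Z y)) c then 1 else 0 else 0).
  assert (hnn : forall y, 0 <= h y) by (intros; unfold h; repeat destruct Rlt_dec; lra).
  apply Rle_trans with (sum_f_R0 (fun x => if Nat.leb (phi x) M then h (phi x) * X x else 0) N).
  { apply sum_Rle. intros x Hx. rewrite (proj2 (Nat.leb_le _ _) (HM x Hx)).
    pose proof (le_pushforward X phi hX x) as XZ. fold Z in XZ.
    pose proof (Rmult_le_pos _ _ (hnn (phi x)) (proj1 hX x)) as hhX.
    unfold info_lt_term.
    destruct (Rlt_dec 0 (X x)) as [Xpos|]; [|lra].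
    destruct (Rlt_dec (ln (/ X x)) c) as [Xlt|]; [|lra].
    pose proof (ln_inv_antitone _ _ Xpos XZ).
    replace (h (phi x)) with 1; [lra|].
    unfold h. destruct (Rlt_dec 0 (Z (phi x))); [|lra].
    destruct (Rlt_dec (ln (/ Z (phi x))) c); lra. }
  rewrite <- sum_over_fibres. fold (fibre X phi).
  apply Rle_trans with (sum_f_R0 (info_lt_term Z c) M);
    [|apply prob_info_lt_partial, pushforward_subdist; auto].
  apply sum_Rle; intros y _.
  replace (info_lt_term Z c y) with (h y * Z y)
    by (unfold h, info_lt_term; repeat destruct Rlt_dec; lra).
  apply Rmult_le_compat_l; auto. apply (fibre_series X phi hX).
Qed.

Definition shift_const (m : R) : R := / (1 - exp (- m)).

Lemma exp_neg_bounds (m : R) : 0 < m -> 0 < exp (- m) < 1.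
Proof. intros. split; [apply exp_pos|]. rewrite <- exp_0. apply exp_increasing; lra. Qed.

Lemma shift_const_ge_1 (m : R) : 0 < m -> 1 <= shift_const m.
Proof.
  intros hm. destruct (exp_neg_bounds m hm).
  unfold shift_const. rewrite <- Rinv_1. apply Rinv_le_contravar; lra.
Qed.

Lemma small_le_shift_const (y z m : R) :
  0 < m -> 0 <= y -> y <= exp (- m) * z -> z <= shift_const m * Rabs (y - z).
Proof.
  intros hm hy Hyz. destruct (exp_neg_bounds m hm).
  rewrite Rabs_minus_sym, Rabs_right by nra. unfold shift_const.
  apply (Rmult_le_reg_l (1 - exp (- m))); [lra|].
  rewrite <- Rmult_assoc, Rinv_r by lra. nra.
Qed.

Lemma info_lt_term_shift (Y Z : nat -> R) (c m : R) (a : nat) : 0 < m -> 0 <= Y a ->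
  info_lt_term Z c a <= info_lt_term Y (c + m) a + shift_const m * Rabs (Y a - Z a).
Proof.
  intros hm hy. pose proof (shift_const_ge_1 m hm) as hk.
  pose proof (Rabs_pos (Y a - Z a)) as ha.
  pose proof (Rmult_le_pos (shift_const m) _ ltac:(lra) ha) as hka.
  pose proof (info_lt_term_nonneg Y (c + m) a) as hY0.
  unfold info_lt_term at 1.
  destruct (Rlt_dec 0 (Z a)) as [hz|]; [|lra].
  destruct (Rlt_dec (ln (/ Z a)) c) as [hlz|]; [|lra].
  assert (small : Y a <= exp (- m) * Z a -> Z a <= shift_const m * Rabs (Y a - Z a))
    by (apply small_le_shift_const; auto).
  unfold info_lt_term.
  destruct (Rlt_dec 0 (Y a)) as [hy'|hy'].
  - destruct (Rlt_dec (ln (/ Y a)) (c + m)) as [|hge].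
    + pose proof (Rle_abs (Z a - Y a)) as hle. rewrite Rabs_minus_sym in hle.
      pose proof (Rmult_le_compat_r _ 1 _ ha hk). lra.
    + apply Rnot_lt_le in hge. rewrite ln_Rinv in * by lra.
      assert (hsmall : Y a <= exp (- m) * Z a).
      { rewrite <- (exp_ln (Y a)), <- (exp_ln (Z a)), <- exp_plus by lra.
        destruct (Req_dec (ln (Y a)) (ln (Z a) + - m)) as [E|E].
        - rewrite E; lra.
        - left; apply exp_increasing; lra. }
      apply small in hsmall. lra.
  - assert (hsmall : Y a <= exp (- m) * Z a) by (pose proof (exp_neg_bounds m hm); nra).
    apply small in hsmall. lra.
Qed.

Lemma sum_lin (f g : nat -> R) (k : R) (N : nat) :
  sum_f_R0 (fun i => f i + k * g i) N = sum_f_R0 f N + k * sum_f_R0 g N.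
Proof. induction N; simpl; [|rewrite IHN]; ring. Qed.

Lemma vdist_nonneg (P Q : nat -> R) : 0 <= vdist P Q.
Proof. apply series_nonneg; intros; apply Rabs_pos. Qed.

Lemma vdist_partial (P Q : nat -> R) (N : nat) : is_subdist P -> is_subdist Q ->
  sum_f_R0 (fun a => Rabs (P a - Q a)) N <= vdist P Q.
Proof.
  intros [P0 P1] [Q0 Q1].
  apply (series_bounded _ 2); [intros; apply Rabs_pos|]. intros M.
  apply Rle_trans with (sum_f_R0 (fun a => P a + 1 * Q a) M).
  - apply sum_Rle; intros a _. specialize (P0 a); specialize (Q0 a).
    unfold Rabs; destruct Rcase_abs; lra.
  - rewrite sum_lin. specialize (P1 M); specialize (Q1 M); lra.
Qed.

Lemma prob_info_lt_shift (Y Z : nat -> R) (c m : R) :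
  is_subdist Y -> is_subdist Z -> 0 < m ->
  prob_info_lt Z c <= prob_info_lt Y (c + m) + shift_const m * vdist Y Z.
Proof.
  intros hY hZ hm.
  apply (series_bounded _ _ (info_lt_term_nonneg Z c)). intros N.
  apply Rle_trans with
    (sum_f_R0 (fun a => info_lt_term Y (c + m) a + shift_const m * Rabs (Y a - Z a)) N).
  { apply sum_Rle; intros; apply info_lt_term_shift; auto; apply hY. }
  rewrite sum_lin. apply Rplus_le_compat; [apply prob_info_lt_partial; auto|].
  apply Rmult_le_compat_l; [pose proof (shift_const_ge_1 m hm); lra|].
  apply vdist_partial; auto.
Qed.

Lemma info_spectrum_gap (X Y : nat -> R) (phi : nat -> nat) (c m : R) :
  is_dist X -> is_dist Y -> 0 < m ->
  - (shift_const m * vdist Y (pushforward X phi)) <=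
  prob_info_lt Y (c + m) - prob_info_lt X c.
Proof.
  intros hX hY hm.
  pose proof (prob_info_lt_pushforward X phi c hX).
  pose proof (prob_info_lt_shift Y (pushforward X phi) c m
                (dist_subdist Y hY) (pushforward_subdist X phi hX) hm).
  lra.
Qed.

(* Rinf defaults to 0, so lower bounds are only inherited when non-positive. *)
Lemma Rinf_ge (E : R -> Prop) (L : R) : (forall x, E x -> L <= x) -> L <= 0 -> L <= Rinf E.
Proof.
  intros H H0. unfold Rinf. destruct excluded_middle_informative as [h|h]; auto.
  destruct (constructive_indefinite_description _ h) as [l [A B]]; simpl. apply B; auto.
Qed.

Lemma Rsup_ge (E : R -> Prop) (x L : R) : E x -> L <= x -> L <= 0 -> L <= Rsup E.
Proof.
  intros Ex H H0. unfold Rsup. destruct excluded_middle_informative as [h|h]; auto.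
  destruct (constructive_indefinite_description _ h) as [l [A B]]; simpl.
  specialize (A x Ex). lra.
Qed.

Lemma Rliminf_nonneg (a : nat -> R) :
  (forall eps, 0 < eps -> exists N, forall n, (N <= n)%nat -> - eps <= a n) ->
  0 <= Rliminf a.
Proof.
  intros Ha.
  assert (Heps : forall eps, 0 < eps -> - eps <= Rliminf a).
  { intros eps he. destruct (Ha eps he) as [N HN].
    apply (Rsup_ge _ _ _ (ex_intro _ N eq_refl)); [|lra].
    apply Rinf_ge; [|lra]. intros z [n [Hn ->]]. auto. }
  destruct (Rle_or_lt 0 (Rliminf a)) as [|Hl]; auto.
  specialize (Heps (- Rliminf a / 2) ltac:(lra)). lra.
Qed.

Theorem lemma6 (PX PY : nat -> nat -> R)
  (hX : forall n, is_dist (PX n)) (hY : forall n, is_dist (PY n))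
  (happrox : approximating PX PY) :
  0 <= Rinf (fun v => exists m : R, 0 < m /\
         v = Rliminf (fun n =>
               Rinf (fun w => exists c : R,
                       w = prob_info_lt (PY n) (c + m) - prob_info_lt (PX n) c))).
Proof.
  destruct happrox as [phi Hd].
  apply Rinf_ge; [|lra]. intros v [m [hm ->]].
  apply Rliminf_nonneg. intros eps he.
  pose proof (shift_const_ge_1 m hm) as hk.
  (* once k_m d_n < eps, every spectral gap at stage n exceeds -eps *)
  destruct (Hd (eps / shift_const m)) as [N HN].
  { apply Rlt_gt, Rdiv_lt_0_compat; lra. }
  exists N. intros n Hn.
  specialize (HN n Hn). unfold Rdist in HN. rewrite Rminus_0_r in HN.
  rewrite Rabs_right in HN by (apply Rle_ge, vdist_nonneg).
  apply (Rmult_lt_compat_l (shift_const m)) in HN; [|lra].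
  replace (shift_const m * (eps / shift_const m)) with eps in HN by (field; lra).
  apply Rinf_ge; [|lra]. intros w [c ->].
  pose proof (info_spectrum_gap (PX n) (PY n) (phi n) c m (hX n) (hY n) hm). lra.
Qed.
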